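(* Let $r=[r_0,\ldots,r_m]$ and $c=[c_0,\ldots,c_n]$ be selections of rows and columns of the Pascal upper triangular matrix $T$, and let $\{\hat r,\hat c\}$ be an ordered sub-pair of $\{r,c\}$ of length $p+1\ge 1$, with $\hat r=[\hat r_0,\ldots,\hat r_p]$ and $\hat c=[\hat c_0,\ldots,\hat c_p]$. Then: (i) $T_{\hat r,\hat c}$ is a $(p+1)\times(p+1)$ invertible submatrix of $T_{r,c}$; (ii) $T_{\hat r,c}$ is a $(p+1)\times(n+1)$ matrix of full row rank $p+1$; (iii) $T_{r,\hat c}$ is an $(m+1)\times(p+1)$ matrix of full column rank $p+1$. If moreover $\{\hat r,\hat c\}$ is maximal, then: (iv) $\operatorname{rank}(T_{r,c})=p+1$; (v) the columns of $T_{r,\hat c}$ span the column space of $T_{r,c}$; (vi) the rows of $T_{\hat r,c}$ span the row space of $T_{r,c}$.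
   Context: The Pascal upper triangular matrix is the infinite matrix $T=(T_{i,j})_{i,j\ge 0}$ with $T_{i,j}=\binom{j}{i}$, where $\binom{j}{i}:=0$ if $i>j$ (rows and columns indexed from $0$). A selection of rows (resp. columns) is a strictly increasing finite sequence of nonnegative integers. For selections $r=[r_0,\ldots,r_m]$ and $c=[c_0,\ldots,c_n]$, $T_{r,c}$ denotes the $(m+1)\times(n+1)$ matrix whose $(i,j)$ entry is $\binom{c_j}{r_i}$. A pair $\{\hat r,\hat c\}$ is an ordered sub-pair of $\{r,c\}$ of length $p+1$ if $\hat r=[\hat r_0,\ldots,\hat r_p]$ is a subsequence of $r$, $\hat c=[\hat c_0,\ldots,\hat c_p]$ is a subsequence of $c$, and $\hat r_i\le \hat c_i$ for all $i=0,\ldots,p$ (the empty pair has length $0$). It is maximal if no ordered sub-pair of $\{r,c\}$ has length greater than $p+1$. *)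

From HB Require Import structures.
From mathcomp Require Import all_boot all_order all_algebra.
Set Implicit Arguments. Unset Strict Implicit. Unset Printing Implicit Defensive.
Import Order.TTheory GRing.Theory Num.Theory.

Definition selection (s : seq nat) : bool := sorted ltn s.

(* T_{r,c} : the submatrix of the Pascal upper triangular matrix T (T_{i,j} = C(j,i))
   with rows r and columns c; entry (i,j) is binom(c_j, r_i) (which is 0 when r_i > c_j). *)
Definition pascal_sub (m n : nat) (r c : seq nat) : 'M[rat]_(m, n) :=
  \matrix_(i < m, j < n) ('C(nth 0%N c j, nth 0%N r i))%:R%R.

Definition ordered_subpair (r c rh ch : seq nat) : Prop :=
  [/\ size rh = size ch, subseq rh r, subseq ch c &
      forall i, (i < size rh)%N -> (nth 0%N rh i <= nth 0%N ch i)%N].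

Definition maximal_subpair (r c rh ch : seq nat) : Prop :=
  ordered_subpair r c rh ch /\
  forall rh' ch', ordered_subpair r c rh' ch' -> (size rh' <= size rh)%N.

From HB Require Import structures.
From mathcomp Require Import all_boot all_order all_algebra.
From mathcomp Require Import zify.
Import Order.TTheory GRing.Theory Num.Theory.
Set Implicit Arguments. Unset Strict Implicit. Unset Printing Implicit Defensive.
Local Open Scope ring_scope.

(** The heart of the matter is a sign property of square binomial matrices
    [B(r, c) = (C(c_j, r_i))_{i,j}] with strictly increasing [r] and [c]:
    [det B(r, c) >= 0], with strict inequality when [r_i <= c_i] for all [i].
    Subtracting from each column the previous one turns, by the hockey-stick
    identity, column [j] into [sum_{c_{j-1} <= k < c_j} C(k, r_i - 1)];
    multilinearity then expands the determinant into determinants of binomial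
    matrices with rows [r_i - 1] and increasing columns [k_0 < k_1 < ...], and
    the term [k_j = c_j - 1] is positive by induction.  Conversely, if
    [c_k < r_k], the first [k + 1] columns vanish from row [k] on, so they are
    dependent and [B(r, c)] is singular.  Hence an ordered sub-pair indexes an
    invertible submatrix, which gives (i)-(iii); and since a rank-[k] matrix
    has an invertible [k x k] submatrix on increasing rows and columns, the
    rank of [T_{r,c}] is the length of a maximal ordered sub-pair, which gives
    (iv)-(vi). *)

Lemma binS_sum c r : 'C(c, r.+1) = (\sum_(0 <= k < c) 'C(k, r))%N.
Proof.
elim: c => [|c IHc]; first by rewrite big_geq.
by rewrite binS IHc big_nat_recr //= addnC.
Qed.

Lemma binS_sub_sum (R : nzRingType) d c r : (d <= c)%N ->
  ('C(c, r.+1))%:R - ('C(d, r.+1))%:R = \sum_(d <= k < c) ('C(k, r))%:R :> R.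
Proof.
move=> le_dc; rewrite !binS_sum (@big_cat_nat _ _ _ d 0 c _ _ (leq0n d) le_dc) /= natrD !natr_sum.
by rewrite addrC addKr.
Qed.

Lemma sum_ltn_at n (F G : 'I_n -> nat) j :
  (forall k, k != j -> F k = G k) -> (F j < G j)%N ->
  (\sum_(k < n) F k < \sum_(k < n) G k)%N.
Proof.
move=> eqFG lt_FGj; rewrite (bigD1 j) //= [X in (_ < X)%N](bigD1 j) //=.
by rewrite (eq_bigr G) ?ltn_add2r // => k /andP[_ /eqFG].
Qed.

Section ColumnOperations.

Variable R : comNzRingType.

Lemma det_add_col n (A B C : 'M[R]_n) j :
  col j A = col j B + col j C -> col' j B = col' j A -> col' j C = col' j A ->
  \det A = \det B + \det C.
Proof.
move=> colA colB colC; rewrite -det_tr -(det_tr B) -(det_tr C).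
rewrite (determinant_multilinear (B := B^T) (C := C^T) (i0 := j) (b := 1) (c := 1)) ?mul1r //.
- by rewrite !scale1r -!tr_col colA linearD.
- by rewrite -!tr_col' colB.
- by rewrite -!tr_col' colC.
Qed.

Lemma det_col0 n (A : 'M[R]_n) j : col j A = 0 -> \det A = 0.
Proof.
move=> colA0; rewrite (expand_det_col _ j) big1 // => i _.
by have := congr1 (fun M : 'cV_n => M i 0) colA0; rewrite !mxE => ->; rewrite mul0r.
Qed.

Definition diff_mx n : 'M[R]_n :=
  \matrix_(k, j) ((k == j)%:R - (k.+1 == j :> nat)%:R).

Lemma det_diff_mx n : \det (diff_mx n) = 1.
Proof.
rewrite -det_tr det_trig; last first.
  apply/is_trig_mxP => i j lt_ij; rewrite !mxE.
  by rewrite -val_eqE /= (gtn_eqF lt_ij) (@gtn_eqF i j.+1 (ltnW lt_ij)) subrr.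
by apply: big1 => i _; rewrite !mxE eqxx eqn_leq ltnn subr0.
Qed.

Lemma mul_diff_mx0 m n (A : 'M[R]_(m, n)) i (j : 'I_n) :
  j = 0%N :> nat -> (A *m diff_mx n) i j = A i j.
Proof.
move=> j0; rewrite !mxE (bigD1 j) //= big1 => [|k neq_kj].
  by rewrite !mxE eqxx j0 subr0 mulr1 addr0.
by rewrite !mxE (negbTE neq_kj) j0 subrr mulr0.
Qed.

Lemma mul_diff_mxS m n (A : 'M[R]_(m, n)) i (j j' : 'I_n) :
  j = j'.+1 :> nat -> (A *m diff_mx n) i j = A i j - A i j'.
Proof.
move=> jS; have neq_j'j : j' != j by rewrite -val_eqE /= jS ltn_eqF.
rewrite !mxE (bigD1 j) //= (bigD1 j') //= big1 => [|k /andP[neq_kj neq_kj']].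
  by rewrite !mxE eqxx jS eqxx (negbTE neq_j'j) eqn_leq ltnn addr0 subr0 sub0r mulrN1 mulr1.
rewrite !mxE (negbTE neq_kj) jS eqSS.
by rewrite val_eqE (negbTE neq_kj') subrr mulr0.
Qed.

End ColumnOperations.

Definition increasing n (f : nat -> nat) :=
  forall i j, (i < j)%N -> (j < n)%N -> (f i < f j)%N.

Definition dominated n (r c : nat -> nat) := forall i, (i < n)%N -> (r i <= c i)%N.

Lemma increasingS n f :
  (forall j, (j.+1 < n)%N -> (f j < f j.+1)%N) -> increasing n f.
Proof.
move=> f_step i j; elim: j => // j IHj; rewrite ltnS leq_eqVlt => /predU1P[-> | lt_ij] lt_jn.
  exact: f_step.
exact: ltn_trans (IHj lt_ij (ltnW lt_jn)) (f_step j lt_jn).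
Qed.

Lemma increasing_leq n f i j : increasing n f -> (i <= j)%N -> (j < n)%N -> (f i <= f j)%N.
Proof. by move=> inc_f; rewrite leq_eqVlt => /predU1P[-> // | lt_ij /(inc_f _ _ lt_ij)/ltnW]. Qed.

Lemma increasing_shift n f : increasing n.+1 f -> increasing n (fun i => f i.+1).
Proof. by move=> inc_f i j lt_ij lt_jn; apply: inc_f. Qed.

Lemma increasing_gt0 n f i : increasing n f -> (0 < f 0)%N -> (i < n)%N -> (0 < f i)%N.
Proof.
by move=> inc_f f0_gt0 lt_in; apply: leq_trans f0_gt0 (increasing_leq inc_f (leq0n i) lt_in).
Qed.

Lemma increasing_pred n f :
  increasing n f -> (forall i, (i < n)%N -> (0 < f i)%N) -> increasing n (fun i => (f i).-1).
Proof.
move=> inc_f f_gt0 i j lt_ij lt_jn; have := inc_f i j lt_ij lt_jn.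
by have := f_gt0 i (ltn_trans lt_ij lt_jn); lia.
Qed.

Lemma increasing_nth s : selection s -> increasing (size s) (nth 0%N s).
Proof.
move=> sel_s i j lt_ij lt_js; apply: (sorted_ltn_nth ltn_trans) => //.
by rewrite inE (ltn_trans lt_ij).
Qed.

Definition binom_mx {R : nzRingType} n (r c : nat -> nat) : 'M[R]_n :=
  \matrix_(i, j) ('C(c j, r i))%:R.

Definition binom_sum_mx {R : nzRingType} n (r a b : nat -> nat) : 'M[R]_n :=
  \matrix_(i, j) \sum_(a j <= k < b j) ('C(k, r i))%:R.

Definition cons0 (c : nat -> nat) j := if j is j'.+1 then c j' else 0%N.

Lemma mul_diff_binom_mx (R : comNzRingType) n (r c : nat -> nat) (i j : 'I_n) :
  increasing n c -> (0 < r i)%N ->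
  (binom_mx n r c *m diff_mx R n) i j = \sum_(cons0 c j <= k < c j) ('C(k, (r i).-1))%:R.
Proof.
move=> inc_c r_gt0; rewrite -binS_sub_sum ?prednK //; last first.
  by case: j => [[|j] lt_jn] //=; apply: ltnW; apply: inc_c.
case: j => [[|j] lt_jn].
  by rewrite mul_diff_mx0 // !mxE bin0n eqn0Ngt r_gt0 subr0.
by rewrite (@mul_diff_mxS _ _ _ _ _ _ (Ordinal (ltnW lt_jn))) // !mxE.
Qed.

Section BinomialDeterminantSign.

Variable R : numDomainType.

Definition nonneg_pos_if (x : R) (P : Prop) := 0 <= x /\ (P -> 0 < x).

Section IntervalSums.

Variables (n : nat) (r : nat -> nat).
Implicit Types a b c : nat -> nat.

Hypothesis binom_mx_sign :
  forall c, increasing n c -> nonneg_pos_if (\det (binom_mx n r c)) (dominated n r c).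

Definition ordered_intervals (a b : nat -> nat) :=
  forall j, (j.+1 < n)%N -> (b j <= a j.+1)%N.

Lemma det_binom_sum_mx_empty a b (j : 'I_n) :
  (b j <= a j)%N -> \det (binom_sum_mx n r a b : 'M[R]_n) = 0.
Proof.
by move=> le_ba; apply: (det_col0 (j := j)); apply/matrixP => i k; rewrite !mxE big_geq.
Qed.

Lemma det_binom_sum_mx_split a b (j : 'I_n) d : (a j <= d <= b j)%N ->
  \det (binom_sum_mx n r a b : 'M[R]_n) =
  \det (binom_sum_mx n r a [eta b with nat_of_ord j |-> d]) +
  \det (binom_sum_mx n r [eta a with nat_of_ord j |-> d] b).
Proof.
case/andP=> le_ad le_db; apply: (det_add_col (j := j)).
- by apply/matrixP => i k; rewrite !mxE /= eqxx -big_cat_nat.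
- by apply/matrixP => i k; rewrite !mxE /= eq_sym (negbTE (neq_bump _ _)).
- by apply/matrixP => i k; rewrite !mxE /= eq_sym (negbTE (neq_bump _ _)).
Qed.

Lemma binom_sum_mx_unit a b : (forall j : 'I_n, b j = (a j).+1) ->
  binom_sum_mx n r a b = binom_mx n r a :> 'M[R]_n.
Proof. by move=> bS; apply/matrixP => i j; rewrite !mxE bS big_nat1. Qed.

Let binom_sum_sign a b :=
  nonneg_pos_if (\det (binom_sum_mx n r a b))
    (forall j, (j < n)%N -> (a j < b j)%N /\ (r j < b j)%N).

Lemma binom_sum_sign_unit a b : ordered_intervals a b ->
  (forall j : 'I_n, b j = (a j).+1) -> binom_sum_sign a b.
Proof.
move=> ord_ab bS; rewrite /binom_sum_sign binom_sum_mx_unit //.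
have inc_a : increasing n a.
  apply: increasingS => j lt_jn; have := ord_ab j lt_jn.
  by have /= := bS (Ordinal (ltnW lt_jn)); lia.
have [ge0 pos] := binom_mx_sign inc_a; split => // nonempty; apply: pos => i lt_in.
by have := nonempty i lt_in; have /= := bS (Ordinal lt_in); lia.
Qed.

(* Cutting the column sum at [b_j - 1] gives two determinants of the same shape with
   smaller total interval length. *)
Lemma binom_sum_sign_split a b (j : 'I_n) :
  ordered_intervals a b -> ((a j).+1 < b j)%N ->
  (forall a' b', (\sum_(k < n) (b' k - a' k) < \sum_(k < n) (b k - a k))%N ->
     ordered_intervals a' b' -> binom_sum_sign a' b') ->
  binom_sum_sign a b.
Proof.
move=> ord_ab long_j IH; pose d := (b j).-1.
pose b' := [eta b with nat_of_ord j |-> d]; pose a' := [eta a with nat_of_ord j |-> d].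
have le_adb : (a j <= d <= b j)%N by rewrite /d; lia.
have other k : k != j -> (nat_of_ord k == j) = false by rewrite val_eqE => /negbTE.
have [ge0_b' _] : binom_sum_sign a b'.
  apply: IH => [|k lt_kn /=].
    by apply: (sum_ltn_at (j := j)) => [k /other /= -> //|]; rewrite /= eqxx /d; lia.
  by case: eqP => [e | _]; have := ord_ab k lt_kn; rewrite /d -?e; lia.
have [ge0_a' pos_a'] : binom_sum_sign a' b.
  apply: IH => [|k lt_kn /=].
    by apply: (sum_ltn_at (j := j)) => [k /other /= -> //|]; rewrite /= eqxx /d; lia.
  by case: eqP => [e | _]; have := ord_ab k lt_kn; rewrite /d -?e in long_j *; lia.
rewrite /binom_sum_sign (det_binom_sum_mx_split le_adb); split; first exact: addr_ge0.
move=> nonempty; apply: ltr_wpDl ge0_b' (pos_a' _) => k lt_kn /=.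
by case: eqP => [e | _]; have := nonempty k lt_kn; rewrite /d ?e; lia.
Qed.

Lemma det_binom_sum_mx_sign a b : ordered_intervals a b -> binom_sum_sign a b.
Proof.
have [N] := ubnP (\sum_(j < n) (b j - a j))%N.
elim: N a b => // N IHN a b lt_width ord_ab.
have [j le_ba | /= lt_ab] := pickP (fun j : 'I_n => b j <= a j)%N.
  rewrite /binom_sum_sign (det_binom_sum_mx_empty le_ba); split => // nonempty.
  by have [] := nonempty j (ltn_ord j); lia.
have [j /= long_j | /= short] := pickP (fun j : 'I_n => (a j).+1 < b j)%N.
  apply: binom_sum_sign_split long_j _ => // a' b' lt_width' ord_ab'.
  by apply: IHN => //; lia.
by apply: binom_sum_sign_unit => // j; have := lt_ab j; have := short j; lia.
Qed.

End IntervalSums.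

Lemma binom_mx_sign_pos_rows n r c :
  (forall c, increasing n c ->
     nonneg_pos_if (\det (binom_mx n (fun i => (r i).-1) c)) (dominated n (fun i => (r i).-1) c)) ->
  increasing n r -> increasing n c -> (0 < r 0)%N ->
  nonneg_pos_if (\det (binom_mx n r c : 'M[R]_n)) (dominated n r c).
Proof.
move=> IH inc_r inc_c r0_gt0.
have r_gt0 i : (i < n)%N -> (0 < r i)%N by apply: increasing_gt0.
rewrite -[\det _]mulr1 -(det_diff_mx R n) -det_mulmx.
have -> : binom_mx n r c *m diff_mx R n = binom_sum_mx n (fun i => (r i).-1) (cons0 c) c.
  by apply/matrixP => i j; rewrite mul_diff_binom_mx ?r_gt0 // mxE.
have [ge0 pos] := @det_binom_sum_mx_sign n _ IH (cons0 c) c (fun j _ => leqnn _).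
split => // dom; apply: pos => j lt_jn; have := dom j lt_jn; have := r_gt0 j lt_jn.
case: j lt_jn => [|j] lt_jn /=; first by lia.
by have := inc_c j j.+1 (ltnSn j) lt_jn; lia.
Qed.

Lemma binom_mx_sign_row0 n r c :
  (forall r c, increasing n r -> increasing n c ->
     nonneg_pos_if (\det (binom_mx n r c)) (dominated n r c)) ->
  increasing n.+1 r -> increasing n.+1 c -> r 0 = 0%N ->
  nonneg_pos_if (\det (binom_mx n.+1 r c : 'M[R]_n.+1)) (dominated n.+1 r c).
Proof.
move=> IH inc_r inc_c r0_0.
have r_gt0 i : (0 < i)%N -> (i < n.+1)%N -> (0 < r i)%N.
  by move=> i_gt0 lt_in; have := inc_r 0%N i i_gt0 lt_in; rewrite r0_0.
set M := binom_mx n.+1 r c *m diff_mx R n.+1.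
have minorM : row' 0 (col' 0 M) = binom_sum_mx n (fun i => (r i.+1).-1) c (fun j => c j.+1).
  apply/matrixP => i j; rewrite 2!mxE mul_diff_binom_mx // ?mxE !lift0 //.
  by apply: r_gt0 => //; apply: ltn_ord.
have detM : \det M = \det (row' 0 (col' 0 M)).
  rewrite (expand_det_row _ 0) big_ord_recl big1 ?addr0 => [|k _].
    by rewrite /M mul_diff_mx0 // !mxE r0_0 bin0 /cofactor expr0 !mul1r.
  rewrite /M (@mul_diff_mxS _ _ _ _ _ _ (widen_ord (leqnSn n) k)) ?lift0 //.
  by rewrite !mxE r0_0 !bin0 subrr mul0r.
have inc_r' : increasing n (fun i => (r i.+1).-1).
  by apply: increasing_pred (increasing_shift inc_r) _ => i lt_in; apply: r_gt0.
rewrite -[\det _]mulr1 -(det_diff_mx R n.+1) -det_mulmx -/M detM minorM.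
have [ge0 pos] :=
  @det_binom_sum_mx_sign n _ (IH _ ^~ inc_r') c (fun j => c j.+1) (fun j _ => leqnn _).
split => // dom; apply: pos => j lt_jn; split; first exact: inc_c.
by have := dom j.+1 lt_jn; have := r_gt0 j.+1 isT lt_jn; lia.
Qed.

Theorem det_binom_mx_sign n r c : increasing n r -> increasing n c ->
  nonneg_pos_if (\det (binom_mx n r c : 'M[R]_n)) (dominated n r c).
Proof.
elim: n r c => [|n IHn] r c inc_r inc_c.
  by rewrite det_mx00; split => [|_]; rewrite ?ler01 ?ltr01.
have [N] := ubnP (r 0%N); elim: N r c inc_r inc_c => // N IHN r c inc_r inc_c lt_r0N.
have [r0_0 | r0_gt0] := posnP (r 0%N); first exact: binom_mx_sign_row0.
apply: binom_mx_sign_pos_rows => // c' inc_c'.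
by apply: IHN => //; [apply: increasing_pred => // i; apply: increasing_gt0 | rewrite /=; lia].
Qed.

End BinomialDeterminantSign.

Section SubmatrixRank.

Variable F : fieldType.

Lemma mxrank_zero_rows (m n k : nat) (A : 'M[F]_(m, n)) : (k <= m)%N ->
  (forall (i : 'I_m) j, (k <= i)%N -> A i j = 0) -> (\rank A <= k)%N.
Proof.
move=> le_km A0; apply: leq_trans (rank_leq_row (rowsub (widen_ord le_km) A)).
apply: mxrankS; apply/row_subP => i; have [lt_ik | le_ki] := ltnP i k.
  have -> : row i A = row (Ordinal lt_ik) (rowsub (widen_ord le_km) A).
    by rewrite row_rowsub; congr row; apply: val_inj.
  exact: row_sub.
have -> : row i A = 0 by apply/rowP => j; rewrite !mxE A0.
exact: sub0mx.
Qed.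

Lemma mxrank_colsub_unit_inj (n k : nat) (A : 'M[F]_n) (h : 'I_k -> 'I_n) :
  injective h -> A \in unitmx -> \rank (colsub h A) = k.
Proof.
move=> inj_h unitA; apply/eqP; rewrite eqn_leq rank_leq_col /=.
have id_k : rowsub h (invmx A) *m colsub h A = 1%:M.
  by rewrite -mxsub_mul mulVmx //; apply/matrixP => i j; rewrite !mxE (inj_eq inj_h).
by rewrite -{1}(mxrank1 F k) -id_k mxrankM_maxr.
Qed.

Lemma mxrank_colsub_unit m n (A : 'M[F]_(m, n)) (g : 'I_m -> 'I_n) :
  colsub g A \in unitmx -> \rank A = m.
Proof.
move=> unit_gA; apply/eqP; rewrite eqn_leq rank_leq_row /=.
by rewrite -{1}(mxrank_unit unit_gA) -[A in colsub _ A]mulmx1 -mulmx_colsub mxrankM_maxl.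
Qed.

Lemma mxrank_rowsub_unit m n (A : 'M[F]_(m, n)) (f : 'I_n -> 'I_m) :
  rowsub f A \in unitmx -> \rank A = n.
Proof.
move=> unit_fA; rewrite -mxrank_tr; apply: (mxrank_colsub_unit (g := f)).
have -> : colsub f A^T = (rowsub f A)^T by apply/matrixP => i j; rewrite !mxE.
by rewrite unitmx_tr.
Qed.

Lemma eqmx_rowsub_rank m m' n (f : 'I_m' -> 'I_m) (A : 'M[F]_(m, n)) :
  \rank (rowsub f A) = \rank A -> (rowsub f A == A)%MS.
Proof.
have sub_fA : (rowsub f A <= A)%MS by rewrite rowsubE submxMl.
by move=> eq_rank; rewrite sub_fA -(mxrank_leqif_sup sub_fA).2; apply/eqP.
Qed.

Lemma submx_rowsub_img m m1 m2 n (f1 : 'I_m1 -> 'I_m) (f2 : 'I_m2 -> 'I_m) (A : 'M[F]_(m, n)) :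
  (forall i, exists j, f1 i = f2 j) -> (rowsub f1 A <= rowsub f2 A)%MS.
Proof.
move=> f12; apply/row_subP => i; have [j f12_ij] := f12 i.
by rewrite row_rowsub f12_ij -row_rowsub row_sub.
Qed.

Lemma sorted_row_basis (m n k : nat) (A : 'M[F]_(m.+1, n)) : \rank A = k ->
  exists s : seq nat, [/\ size s = k, sorted ltn s, all (gtn m.+1) s &
    \rank (rowsub (fun i : 'I_k => inord (nth 0%N s i)) A) = k].
Proof.
move=> <-; set f := maxrankfun A.
exists (sort leq [seq val (f i) | i <- enum 'I_(\rank A)]); set s := sort _ _.
have uniq_s : uniq s.
  by rewrite sort_uniq map_inj_uniq ?enum_uniq // => i j /val_inj/maxrankfun_inj.
have size_s : size s = \rank A by rewrite size_sort size_map size_enum_ord.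
split => //.
- by rewrite ltn_sorted_uniq_leq uniq_s sort_sorted //; exact: leq_total.
- by rewrite all_sort all_map; apply/allP => i _ /=.
have rank_fA : \rank (rowsub f A) = \rank A by apply/eqP; exact: maxrowsub_free.
rewrite -[RHS]rank_fA; apply/eqP; rewrite eqn_leq !mxrankS //; apply: submx_rowsub_img.
- move=> j; have f_j : val (f j) \in s by rewrite mem_sort; apply: map_f; rewrite mem_enum.
  have lt_idx : (index (val (f j)) s < \rank A)%N by move: f_j; rewrite -index_mem size_s.
  by exists (Ordinal lt_idx); rewrite /= nth_index // inord_val.
- move=> i /=; have : nth 0%N s i \in s by rewrite mem_nth ?size_s.
  by rewrite mem_sort => /mapP[j _ ->]; exists j; exact: inord_val.
Qed.

Lemma sorted_unit_submx (m n k : nat) (A : 'M[F]_(m.+1, n.+1)) : \rank A = k ->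
  exists s t : seq nat, [/\ size s = k, size t = k,
    [&& sorted ltn s, sorted ltn t, all (gtn m.+1) s & all (gtn n.+1) t] &
    mxsub (fun i : 'I_k => inord (nth 0%N s i)) (fun j : 'I_k => inord (nth 0%N t j)) A
      \in unitmx].
Proof.
move=> rankA; have [s [size_s sorted_s lt_s rank_sA]] := sorted_row_basis rankA.
set B := rowsub _ A in rank_sA.
have [t [size_t sorted_t lt_t rank_tB]] := sorted_row_basis (etrans (mxrank_tr B) rank_sA).
exists s, t; split => //; first by rewrite sorted_s sorted_t lt_s lt_t.
rewrite -unitmx_tr -row_free_unit /row_free -[X in _ == X]rank_tB; apply/eqP.
by congr (\rank _); apply/matrixP => i j; rewrite !mxE.
Qed.

End SubmatrixRank.

Lemma binom_mx_unit_dominated (F : fieldType) n r c :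
  increasing n r -> increasing n c -> (binom_mx n r c : 'M[F]_n) \in unitmx ->
  dominated n r c.
Proof.
move=> inc_r inc_c unitA k lt_kn; rewrite leqNgt; apply/negP => lt_ck.
have inj_widen : injective (widen_ord lt_kn) by move=> i j /(congr1 val) /= /val_inj.
have := mxrank_colsub_unit_inj inj_widen unitA.
have : (\rank (colsub (widen_ord lt_kn) (binom_mx n r c : 'M[F]_n)) <= k)%N.
  apply: mxrank_zero_rows => [|i j le_ki]; first exact: ltnW.
  rewrite !mxE bin_small //=.
  have := increasing_leq inc_c (ltn_ord j : (j <= k)%N) lt_kn.
  by have := increasing_leq inc_r le_ki (ltn_ord i); lia.
lia.
Qed.

Lemma subseq_sorted_ltn (s1 s2 : seq nat) :
  sorted ltn s1 -> sorted ltn s2 -> {subset s1 <= s2} -> subseq s1 s2.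
Proof.
move=> sorted_s1 sorted_s2 sub_s12.
have -> : s1 = [seq x <- s2 | x \in s1].
  apply: (irr_sorted_eq ltn_trans ltnn) => //; first exact: (sorted_filter ltn_trans).
  by move=> x; rewrite mem_filter; case: (boolP (x \in s1)) => [/sub_s12 ->|].
exact: filter_subseq.
Qed.

Lemma sorted_map_nth (s ix : seq nat) : sorted ltn s -> sorted ltn ix ->
  all (gtn (size s)) ix -> sorted ltn [seq nth 0%N s i | i <- ix].
Proof.
move=> sorted_s sorted_ix lt_ix; apply: (homo_sorted_in _ lt_ix sorted_ix) => i j i_in j_in.
exact: (sorted_ltn_nth ltn_trans 0%N sorted_s i j i_in j_in).
Qed.

Lemma subseq_map_nth (s ix : seq nat) : sorted ltn s -> sorted ltn ix ->
  all (gtn (size s)) ix -> subseq [seq nth 0%N s i | i <- ix] s.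
Proof.
move=> sorted_s sorted_ix lt_ix; apply: subseq_sorted_ltn => //; first exact: sorted_map_nth.
by move=> _ /mapP[i i_in ->]; rewrite mem_nth //; exact: (allP lt_ix).
Qed.

Lemma ltn_index_sorted (s : seq nat) (x y : nat) : sorted ltn s -> x \in s -> y \in s ->
  (x < y)%N -> (index x s < index y s)%N.
Proof.
move=> sorted_s x_in y_in; apply: contraTT; rewrite -!leqNgt => le_yx.
have sorted_leq_s : sorted leq s by apply: sub_sorted sorted_s => a b /ltnW.
exact: (sorted_leq_index leq_trans leqnn sorted_leq_s _ _ y_in x_in le_yx).
Qed.

Lemma subseq_nth_index (r s : seq nat) m k : selection r -> size r = m.+1 ->
  subseq s r -> size s = k ->
  exists f : 'I_k -> 'I_m.+1,
    {homo f : i j / (i < j)%N} /\ forall i, nth 0%N r (f i) = nth 0%N s i.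
Proof.
move=> sel_r size_r sub_sr size_s.
have s_in_r (i : 'I_k) : nth 0%N s i \in r by apply: (mem_subseq sub_sr); rewrite mem_nth ?size_s.
have lt_index (i : 'I_k) : (index (nth 0%N s i) r < m.+1)%N by rewrite -size_r index_mem.
exists (fun i => Ordinal (lt_index i)); split => [i j lt_ij | i] /=; last exact: nth_index.
apply: ltn_index_sorted => //; apply: (increasing_nth (subseq_sorted ltn_trans sub_sr sel_r)) => //.
by rewrite size_s.
Qed.

Lemma pascal_sub_unitP k rh ch : selection rh -> selection ch -> size rh = k -> size ch = k ->
  pascal_sub k k rh ch \in unitmx <-> (forall i, (i < k)%N -> (nth 0%N rh i <= nth 0%N ch i)%N).
Proof.
move=> sel_rh sel_ch size_rh size_ch.
have := increasing_nth sel_rh; have := increasing_nth sel_ch.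
rewrite size_rh size_ch => inc_ch inc_rh; split; first exact: binom_mx_unit_dominated.
have [_ pos] := det_binom_mx_sign rat inc_rh inc_ch.
by move=> dom; rewrite unitmxE unitfE lt0r_neq0 ?pos.
Qed.

Lemma ordered_subpair_of_rank m n r c : selection r -> selection c ->
  size r = m.+1 -> size c = n.+1 ->
  exists rh ch, ordered_subpair r c rh ch /\ size rh = \rank (pascal_sub m.+1 n.+1 r c).
Proof.
move=> sel_r sel_c size_r size_c; set B := pascal_sub _ _ r c.
have [s [t [size_s size_t /and4P[sorted_s sorted_t lt_s lt_t] unit_st]]] :=
  sorted_unit_submx (erefl (\rank B)).
have lt_s' : all (gtn (size r)) s by rewrite size_r.
have lt_t' : all (gtn (size c)) t by rewrite size_c.
set rh := [seq nth 0%N r i | i <- s]; set ch := [seq nth 0%N c j | j <- t].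
have size_rh : size rh = \rank B by rewrite size_map.
have size_ch : size ch = \rank B by rewrite size_map.
exists rh, ch; split => //; split; rewrite ?size_rh ?size_ch ?subseq_map_nth //.
apply/(pascal_sub_unitP (sorted_map_nth _ _ _) (sorted_map_nth _ _ _) size_rh size_ch) => //.
have -> : pascal_sub _ _ rh ch = mxsub (fun i : 'I_(\rank B) => inord (nth 0%N s i))
                                     (fun j : 'I_(\rank B) => inord (nth 0%N t j)) B.
  apply/matrixP => i j; rewrite !mxE !(nth_map 0%N) ?size_s ?size_t // !inordK //.
  - by apply: (allP lt_s); rewrite mem_nth ?size_s.
  - by apply: (allP lt_t); rewrite mem_nth ?size_t.
exact: unit_st.
Qed.

Close Scope ring_scope.
Unset Implicit Arguments.

Theorem theorem2 (m n p : nat) (r c rh ch : seq nat) :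
  selection r -> selection c -> size r = m.+1 -> size c = n.+1 ->
  ordered_subpair r c rh ch -> size rh = p.+1 ->
  [/\ (* (i) *)
      (exists (f : 'I_p.+1 -> 'I_m.+1) (g : 'I_p.+1 -> 'I_n.+1),
         [/\ {homo f : i j / (nat_of_ord i < nat_of_ord j)%N},
             {homo g : i j / (nat_of_ord i < nat_of_ord j)%N} &
             pascal_sub p.+1 p.+1 rh ch = mxsub f g (pascal_sub m.+1 n.+1 r c)])
      /\ pascal_sub p.+1 p.+1 rh ch \in unitmx,
      (* (ii) *) \rank (pascal_sub p.+1 n.+1 rh c) = p.+1,
      (* (iii) *) \rank (pascal_sub m.+1 p.+1 r ch) = p.+1 &
      maximal_subpair r c rh ch ->
      [/\ (* (iv) *) \rank (pascal_sub m.+1 n.+1 r c) = p.+1,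
          (* (v) *) (trmx (pascal_sub m.+1 p.+1 r ch) == trmx (pascal_sub m.+1 n.+1 r c))%MS &
          (* (vi) *) (pascal_sub p.+1 n.+1 rh c == pascal_sub m.+1 n.+1 r c)%MS]].
Proof.
move=> sel_r sel_c size_r size_c [size_rh_ch sub_rh sub_ch dom] size_rh.
have size_ch : size ch = p.+1 by rewrite -size_rh_ch.
have sel_rh := subseq_sorted ltn_trans sub_rh sel_r.
have sel_ch := subseq_sorted ltn_trans sub_ch sel_c.
have [f [homo_f nth_f]] := subseq_nth_index sel_r size_r sub_rh size_rh.
have [g [homo_g nth_g]] := subseq_nth_index sel_c size_c sub_ch size_ch.
set B := pascal_sub m.+1 n.+1 r c.
have unit_sub : pascal_sub p.+1 p.+1 rh ch \in unitmx.
  by apply/pascal_sub_unitP => // i lt_ip; apply: dom; rewrite size_rh.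
have rows_sub : pascal_sub p.+1 n.+1 rh c = rowsub f B.
  by apply/matrixP => i j; rewrite !mxE nth_f.
have cols_sub : trmx (pascal_sub m.+1 p.+1 r ch) = rowsub g (trmx B).
  by apply/matrixP => i j; rewrite !mxE nth_g.
have rank_rows : \rank (pascal_sub p.+1 n.+1 rh c) = p.+1.
  apply: (mxrank_colsub_unit (g := g)); congr (_ \in unitmx): unit_sub.
  by apply/matrixP => i j; rewrite !mxE nth_g.
have rank_cols : \rank (pascal_sub m.+1 p.+1 r ch) = p.+1.
  apply: (mxrank_rowsub_unit (f := f)); congr (_ \in unitmx): unit_sub.
  by apply/matrixP => i j; rewrite !mxE nth_f.
split => //.
  split => //; exists f, g; split => //.
  by apply/matrixP => i j; rewrite !mxE nth_f nth_g.
move=> [_ maximal]; have rank_B : \rank B = p.+1.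
  have [rh' [ch' [sub' size_rh']]] := ordered_subpair_of_rank sel_r sel_c size_r size_c.
  apply/eqP; rewrite eqn_leq -{1}size_rh' -{1}size_rh (maximal _ _ sub') /=.
  by rewrite -rank_rows rows_sub mxrankS // rowsubE submxMl.
split => //.
- by rewrite cols_sub eqmx_rowsub_rank // -cols_sub !mxrank_tr rank_cols.
- by rewrite rows_sub eqmx_rowsub_rank // -rows_sub rank_rows.
Qed.
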